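(* Assume $|\chi|=\infty$ and that $q=\chi^{-1}(a)$ is not a root of unity. Let $y=[V_2(\varepsilon)]$ in $r(\mathcal W)$. Then for every $m\ge1$, $$[V_m(\varepsilon)]=\sum_{i=0}^{[\frac{m-1}{2}]}(-1)^i\binom{m-1-i}{i}\chi^iy^{m-1-2i}\quad\text{in } r(\mathcal W).$$
   Context: Let $k$ be an algebraically closed field of characteristic zero, $G$ a group, $a$ a central element of $G$, $\hat G$ the group of characters $G\to k^\times$ with identity $\varepsilon$, and $\chi\in\hat G$ with $\chi(a)\ne1$. $H=kG(\chi^{-1},a,0)$ is the Hopf algebra generated by the group $G$ and $x$ with $xg=\chi^{-1}(g)gx$, $\Delta(g)=g\otimes g$, $\Delta(x)=x\otimes a+1\otimes x$; tensor products of $H$-modules: $g(m\otimes n)=gm\otimes gn$, $x(m\otimes n)=xm\otimes an+m\otimes xn$. $V_t(\lambda)$ ($\lambda\in\hat G$, $t\ge1$) has basis $m_0,\dots,m_{t-1}$, $gm_i=\chi^i(g)\lambda(g)m_i$, $xm_i=m_{i+1}$ ($i\le t-2$), $xm_{t-1}=0$. $\mathcal W$ is the category of finite-dimensional weight $H$-modules and $r(\mathcal W)$ its Green ring (abelian group on isoclasses $[V]$ modulo $[U\oplus V]=[U]+[V]$, product $[U][V]=[U\otimes V]$). Each $\lambda\in\hat G$ (in particular $\chi^i$) denotes the element $[V_1(\lambda)]$ of $r(\mathcal W)$; $[r]$ is the integer part. *)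

(* Setting of the paper: k algebraically closed field of
   characteristic 0, G an arbitrary (possibly infinite) group (mathcomp's
   [groupType] from boot/monoid.v), H = kG(chi^-1, a, 0). *)
From HB Require Import structures.
From mathcomp Require Import all_boot all_order all_algebra.
From mathcomp Require Import mxtens.
Set Implicit Arguments.
Unset Strict Implicit.
Unset Printing Implicit Defensive.
Import Order.TTheory GRing.Theory Num.Theory.
Local Open Scope ring_scope.

Definition is_char (k : fieldType) (G : groupType) (lam : G -> k) : Prop :=
  lam 1%g = 1 /\ forall g h : G, lam (g * h)%g = lam g * lam h.

Definition eps (k : fieldType) (G : groupType) : G -> k := fun _ => 1.
Definition charpow (k : fieldType) (G : groupType) (chi : G -> k) (i : nat)
  : G -> k := fun g => chi g ^+ i.

(* A finite-dimensional (candidate) H-module, on column vectors k^hdim: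
   hrho g is the action of g in G, hx is the action of x. *)
Record Hmod (k : fieldType) (G : groupType) := HMod {
  hdim : nat;
  hrho : G -> 'M[k]_hdim;
  hx : 'M[k]_hdim }.
Arguments HMod {k G} hdim hrho hx.

Definition is_Hmod (k : fieldType) (G : groupType) (chi : G -> k)
  (M : Hmod k G) : Prop :=
  [/\ hrho M 1%g = 1%:M,
      (forall g h : G, hrho M (g * h)%g = hrho M g *m hrho M h) &
      (forall g : G, hx M *m hrho M g = (chi g)^-1 *: (hrho M g *m hx M))].

(* Weight module: M is the (necessarily direct) sum of its weight spaces
   M_lam, i.e. M has a basis (columns of an invertible P) of weight vectors. *)
Definition is_weight (k : fieldType) (G : groupType) (M : Hmod k G) : Prop :=
  exists P : 'M[k]_(hdim M), P \in unitmx /\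
    forall j : 'I_(hdim M), exists lam : G -> k, is_char lam /\
      forall g : G, hrho M g *m col j P = lam g *: col j P.

Definition inW (k : fieldType) (G : groupType) (chi : G -> k) (M : Hmod k G)
  : Prop := is_Hmod chi M /\ is_weight M.

Definition Hiso (k : fieldType) (G : groupType) (M N : Hmod k G) : Prop :=
  exists (P : 'M[k]_(hdim N, hdim M)) (Q : 'M[k]_(hdim M, hdim N)),
    [/\ Q *m P = 1%:M, P *m Q = 1%:M,
        (forall g : G, P *m hrho M g = hrho N g *m P) &
        P *m hx M = hx N *m P].

Definition Hsum (k : fieldType) (G : groupType) (M N : Hmod k G) : Hmod k G :=
  HMod (hdim M + hdim N)
    (fun g => block_mx (hrho M g) 0 0 (hrho N g))
    (block_mx (hx M) 0 0 (hx N)).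

Definition Hzero (k : fieldType) (G : groupType) : Hmod k G :=
  HMod 0 (fun _ => 0) 0.

Fixpoint Hmul (k : fieldType) (G : groupType) (n : nat) (M : Hmod k G)
  : Hmod k G :=
  if n is n'.+1 then Hsum M (Hmul n' M) else Hzero k G.

Definition Hbig (k : fieldType) (G : groupType) (s : seq (Hmod k G))
  : Hmod k G := foldr (@Hsum k G) (Hzero k G) s.

Definition Htens (k : fieldType) (G : groupType) (a : G) (M N : Hmod k G)
  : Hmod k G :=
  HMod (hdim M * hdim N)
    (fun g => hrho M g *t hrho N g)
    (hx M *t hrho N a + (1%:M : 'M[k]_(hdim M)) *t hx N).

(* V_t(lam): basis m_0..m_{t-1}, g m_i = chi^i(g) lam(g) m_i,
   x m_i = m_{i+1}, x m_{t-1} = 0. *)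
Definition Vmod (k : fieldType) (G : groupType) (chi : G -> k) (t : nat)
  (lam : G -> k) : Hmod k G :=
  HMod t
    (fun g => \matrix_(i < t, j < t) ((i == j)%:R * (chi g ^+ i * lam g)))
    (\matrix_(i < t, j < t) ((i == j.+1 :> nat)%:R)).

(* n-th tensor power M^{(x) n} (M^{(x) 0} = V_1(eps), the unit of r(W)). *)
Fixpoint Htpow (k : fieldType) (G : groupType) (chi : G -> k) (a : G)
  (M : Hmod k G) (n : nat) : Hmod k G :=
  if n is n'.+1 then Htens a M (Htpow chi a M n') else Vmod chi 1 (@eps k G).

(* Formal Z-linear combinations  sum_j c_j [M_j]  of classes in r(W). *)
Definition posmod (k : fieldType) (G : groupType) (s : seq (int * Hmod k G))
  : Hmod k G :=
  Hbig [seq Hmul (if (0 <= p.1)%R then absz p.1 else 0%N) p.2 | p <- s].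
Definition negmod (k : fieldType) (G : groupType) (s : seq (int * Hmod k G))
  : Hmod k G :=
  Hbig [seq Hmul (if (p.1 < 0)%R then absz p.1 else 0%N) p.2 | p <- s].

(* Equality in the Green ring r(W) (the abelian group on isoclasses of W
   modulo [U (+) V] = [U] + [V], i.e. the group completion of the monoid of
   isoclasses under (+)):  sum s = sum t  iff  s^+ (+) t^- (+) Z ~ t^+ (+) s^- (+) Z
   for some Z in W. *)
Definition green_eq (k : fieldType) (G : groupType) (chi : G -> k)
  (s t : seq (int * Hmod k G)) : Prop :=
  exists Z : Hmod k G, inW chi Z /\
    Hiso (Hsum (Hsum (posmod s) (negmod t)) Z)
         (Hsum (Hsum (posmod t) (negmod s)) Z).

From HB Require Import structures.
From mathcomp Require Import all_boot all_order all_algebra.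
From mathcomp Require Import mxtens.
From mathcomp Require Import ring zify.
Set Implicit Arguments.
Unset Strict Implicit.
Unset Printing Implicit Defensive.
Import Order.TTheory GRing.Theory Num.Theory.
Local Open Scope ring_scope.

(* Write t = chi(a).  As q = t^-1 is not a root of unity, the q-integers
   [j] = 1 + t + ... + t^(j-1) never vanish, and an explicit change of basis
   gives the Clebsch-Gordan isomorphism V_2 (x) V_(n+1) ~ V_(n+2) (+) V_n(chi).
   Tensoring with V_1(lam) twists a module by lam, and twisting commutes with
   V_2 (x) -.  Hence [V_(n+3)] = y [V_(n+2)] - chi [V_(n+1)], and the formula
   follows by induction on n through Pascal's rule.  The identity in r(W) is
   proved as an isomorphism V_m (+) (negative terms) ~ (positive terms), so
   that Z = 0 witnesses it. *)

Section MatrixFacts.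
Variable k : fieldType.

Lemma tens1mx1 m n : (1%:M : 'M[k]_m) *t (1%:M : 'M[k]_n) = 1%:M.
Proof.
apply/matrixP => i j.
case: (mxtens_indexP i) => i1 i2; case: (mxtens_indexP j) => j1 j2.
rewrite tensmxE !mxE -natrM (inj_eq (can_inj (@mxtens_indexK m n))) xpair_eqE.
by case: (i1 == j1); case: (i2 == j2).
Qed.

Lemma tensmxDr m n p q (A : 'M[k]_(m, n)) (B C : 'M[k]_(p, q)) :
  A *t (B + C) = A *t B + A *t C.
Proof. by apply/matrixP => i j; rewrite !mxE mulrDr. Qed.

Lemma tensmxZl m n p q c (A : 'M[k]_(m, n)) (B : 'M[k]_(p, q)) :
  (c *: A) *t B = c *: (A *t B).
Proof. by apply/matrixP => i j; rewrite !mxE mulrA. Qed.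

Lemma tensmxZr m n p q c (A : 'M[k]_(m, n)) (B : 'M[k]_(p, q)) :
  A *t (c *: B) = c *: (A *t B).
Proof. by apply/matrixP => i j; rewrite !mxE mulrCA. Qed.

Lemma mul_block_diag m1 m2 n1 n2 p1 p2 (A : 'M[k]_(m1, n1)) (B : 'M[k]_(m2, n2))
    (C : 'M[k]_(n1, p1)) (D : 'M[k]_(n2, p2)) :
  block_mx A 0 0 B *m block_mx C 0 0 D = block_mx (A *m C) 0 0 (B *m D).
Proof. by rewrite mulmx_block !mulmx0 !mul0mx !addr0 !add0r. Qed.

Lemma mul_block_diag_col p1 p2 r (A : 'M[k]_p1) (B : 'M[k]_p2)
    (u : 'M[k]_(p1, r)) (v : 'M[k]_(p2, r)) :
  block_mx A 0 0 B *m col_mx u v = col_mx (A *m u) (B *m v).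
Proof. by rewrite mul_block_col !mul0mx addr0 add0r. Qed.

Lemma col_mxZl p1 p2 r c (u : 'M[k]_(p1, r)) :
  col_mx (c *: u) (0 : 'M_(p2, r)) = c *: col_mx u 0.
Proof. by rewrite scale_col_mx scaler0. Qed.

Lemma col_mxZr p1 p2 r c (v : 'M[k]_(p2, r)) :
  col_mx (0 : 'M_(p1, r)) (c *: v) = c *: col_mx 0 v.
Proof. by rewrite scale_col_mx scaler0. Qed.

Lemma block0_mx n (A : 'M[k]_0) (B : 'M[k]_(0, n)) (C : 'M[k]_(n, 0)) (D : 'M[k]_n) :
  block_mx A B C D = D.
Proof.
apply/matrixP => i j.
have Ei : i = rshift 0 i by apply: val_inj.
have Ej : j = rshift 0 j by apply: val_inj.
by rewrite {1}Ei {1}Ej block_mxEdr.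
Qed.

End MatrixFacts.

Section Isomorphism.
Variables (k : fieldType) (G : groupType).
Implicit Types M N L : Hmod k G.

Lemma Hiso_refl M : Hiso M M.
Proof. by exists 1%:M, 1%:M; split=> [||g|]; rewrite ?mulmx1 ?mul1mx. Qed.

Lemma Hiso_sym M N : Hiso M N -> Hiso N M.
Proof.
case=> P [Q [QP PQ rhoP xP]]; exists Q, P; split=> // [g|].
  by rewrite -[Q *m _]mulmx1 -PQ !mulmxA -(mulmxA Q) -rhoP mulmxA QP mul1mx.
by rewrite -[Q *m _]mulmx1 -PQ !mulmxA -(mulmxA Q) -xP mulmxA QP mul1mx.
Qed.

Lemma Hiso_trans M N L : Hiso M N -> Hiso N L -> Hiso M L.
Proof.
case=> P [Q [QP PQ rhoP xP]] [P' [Q' [QP' PQ' rhoP' xP']]].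
exists (P' *m P), (Q *m Q'); split=> [||g|].
- by rewrite mulmxA -(mulmxA Q) QP' mulmx1 QP.
- by rewrite mulmxA -(mulmxA P') PQ mulmx1 PQ'.
- by rewrite -mulmxA rhoP mulmxA rhoP' mulmxA.
- by rewrite -mulmxA xP mulmxA xP' mulmxA.
Qed.

Lemma Hiso_linv M N (P : 'M[k]_(hdim N, hdim M)) (Q : 'M[k]_(hdim M, hdim N)) :
  hdim M = hdim N -> Q *m P = 1%:M ->
  (forall g, P *m hrho M g = hrho N g *m P) -> P *m hx M = hx N *m P ->
  Hiso M N.
Proof.
move=> eMN QP rhoP xP; exists P, Q; split=> //.
by move: P Q QP {rhoP xP}; case: (hdim N) / eMN => P Q; apply: mulmx1C.
Qed.

Lemma Hiso_cast n1 n2 (e : n1 = n2) (r1 : G -> 'M[k]_n1) (r2 : G -> 'M[k]_n2) x1 x2 :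
  (forall g, castmx (e, e) (r1 g) = r2 g) -> castmx (e, e) x1 = x2 ->
  Hiso (HMod n1 r1 x1) (HMod n2 r2 x2).
Proof.
case: n2 / e r2 x2 => r2 x2 r12 <-; exists 1%:M, 1%:M.
by split=> [||g|] /=; rewrite ?mulmx1 ?mul1mx // -r12 castmx_id.
Qed.

Lemma Hiso_ext n (r1 r2 : G -> 'M[k]_n) x1 x2 :
  (forall g, r1 g = r2 g) -> x1 = x2 -> Hiso (HMod n r1 x1) (HMod n r2 x2).
Proof.
by move=> r12 x12; apply: (@Hiso_cast _ _ (erefl n)) => [g|]; rewrite castmx_id.
Qed.

Lemma hrho_Hsum M N g : hrho (Hsum M N) g = block_mx (hrho M g) 0 0 (hrho N g).
Proof. by []. Qed.

Lemma hx_Hsum M N : hx (Hsum M N) = block_mx (hx M) 0 0 (hx N).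
Proof. by []. Qed.

Lemma Hsum_congr M M' N N' : Hiso M M' -> Hiso N N' -> Hiso (Hsum M N) (Hsum M' N').
Proof.
case=> P [Q [QP PQ rhoP xP]] [P' [Q' [QP' PQ' rhoP' xP']]].
exists (block_mx P 0 0 P'), (block_mx Q 0 0 Q'); split=> [||g|] /=.
- by rewrite mul_block_diag QP QP' -scalar_mx_block.
- by rewrite mul_block_diag PQ PQ' -scalar_mx_block.
- by rewrite !mul_block_diag rhoP rhoP'.
- by rewrite !mul_block_diag xP xP'.
Qed.

Lemma HsumC M N : Hiso (Hsum M N) (Hsum N M).
Proof.
have swapK p q : block_mx 0 1%:M 1%:M 0 *m block_mx 0 1%:M 1%:M 0 = 1%:M :> 'M[k]_(p + q).
  by rewrite mulmx_block !mulmx0 !mul0mx !mulmx1 !addr0 !add0r -scalar_mx_block.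
exists (block_mx 0 1%:M 1%:M 0), (block_mx 0 1%:M 1%:M 0); split=> [||g|] /=;
  by rewrite ?swapK // !mulmx_block !mulmx0 !mul0mx !mulmx1 !mul1mx !addr0 !add0r.
Qed.

Lemma HsumA M N L : Hiso (Hsum M (Hsum N L)) (Hsum (Hsum M N) L).
Proof.
apply: Hiso_sym; case: M N L => [m rm xm] [n rn xn] [l rl xl].
apply: (@Hiso_cast _ _ (esym (addnA m n l))) => [g|] /=.
  have := @block_mxA _ _ _ _ _ _ _ (rm g) 0 0 0 (rn g) 0 0 0 (rl g).
  by rewrite !row_mx0 !col_mx0.
have := @block_mxA _ _ _ _ _ _ _ xm 0 0 0 xn 0 0 0 xl.
by rewrite !row_mx0 !col_mx0.
Qed.

Lemma Hsum0M M : Hiso (Hsum (Hzero k G) M) M.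
Proof. by case: M => n r x; apply: Hiso_ext => [g|]; rewrite /= block0_mx. Qed.

Lemma HsumM0 M : Hiso (Hsum M (Hzero k G)) M.
Proof. exact: Hiso_trans (HsumC _ _) (Hsum0M M). Qed.

Lemma HsumCA M N L : Hiso (Hsum M (Hsum N L)) (Hsum N (Hsum M L)).
Proof.
apply: Hiso_trans (HsumA M N L) _; apply: Hiso_trans (Hiso_sym (HsumA N M L)).
exact: Hsum_congr (HsumC M N) (Hiso_refl L).
Qed.

Lemma Hiso_Hsum_combine (X U Y Y' Z Z' : Hmod k G) :
  Hiso (Hsum (Hsum X U) Y) Y' -> Hiso (Hsum U Z) Z' ->
  Hiso (Hsum X (Hsum Y Z')) (Hsum Y' Z).
Proof.
move=> XUY UZ; apply: Hiso_trans _ (Hsum_congr XUY (Hiso_refl Z)).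
apply: Hiso_trans _ (HsumA _ _ _); apply: Hiso_trans _ (HsumA _ _ _).
apply: Hsum_congr (Hiso_refl X) _; apply: Hiso_trans _ (HsumCA _ _ _).
exact: Hsum_congr (Hiso_refl Y) (Hiso_sym UZ).
Qed.

Lemma Hbig_cat (s1 s2 : seq (Hmod k G)) :
  Hiso (Hbig (s1 ++ s2)) (Hsum (Hbig s1) (Hbig s2)).
Proof.
elim: s1 => [|M s1 IHs] /=; first exact: Hiso_sym (Hsum0M _).
exact: Hiso_trans (Hsum_congr (Hiso_refl M) IHs) (HsumA _ _ _).
Qed.

Lemma Hbig_perm (T : eqType) (f : T -> Hmod k G) (s1 s2 : seq T) :
  perm_eq s1 s2 -> Hiso (Hbig (map f s1)) (Hbig (map f s2)).
Proof.
elim: s1 s2 => [|x s1 IHs] s2 eq12.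
  by move/perm_size: eq12; case: s2 => // _; apply: Hiso_refl.
have x_s2 : x \in s2 by rewrite -(perm_mem eq12) mem_head.
case/splitPr: x_s2 eq12 => s2a s2b eq12.
have eq1 : perm_eq s1 (s2a ++ s2b).
  by rewrite -(perm_cons x) (perm_trans eq12) // -cat1s perm_catCA.
rewrite map_cat /=; apply: Hiso_trans (Hsum_congr (Hiso_refl _) (IHs _ eq1)) _.
rewrite map_cat; apply: Hiso_trans (Hsum_congr (Hiso_refl _) (Hbig_cat _ _)) _.
exact: Hiso_trans (HsumCA _ _ _) (Hiso_sym (Hbig_cat _ (_ :: _))).
Qed.

Lemma Hbig_Hmul (T U : Type) (f : T -> nat) (u : T -> U) (W : U -> Hmod k G) (s : seq T) :
  Hiso (Hbig [seq Hmul (f x) (W (u x)) | x <- s])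
       (Hbig (map W (flatten [seq nseq (f x) (u x) | x <- s]))).
Proof.
have Hmul_nseq n M : Hmul n M = Hbig (nseq n M) by elim: n => //= n ->.
elim: s => [|x s IHs] /=; first exact: Hiso_refl.
rewrite map_cat map_nseq Hmul_nseq.
exact: Hiso_trans (Hsum_congr (Hiso_refl _) IHs) (Hiso_sym (Hbig_cat _ _)).
Qed.

End Isomorphism.

Section Tensor.
Variables (k : fieldType) (G : groupType) (a : G) (chi : G -> k).
Implicit Types M N : Hmod k G.

Lemma hrho_Htens M N g : hrho (Htens a M N) g = hrho M g *t hrho N g.
Proof. by []. Qed.

Lemma hx_Htens M N : hx (Htens a M N) = hx M *t hrho N a + 1%:M *t hx N.
Proof. by []. Qed.

Definition Hscale (c : G -> k) M : Hmod k G :=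
  HMod (hdim M) (fun g => c g *: hrho M g) (hx M).

Lemma Hscale_congr c M N : Hiso M N -> Hiso (Hscale c M) (Hscale c N).
Proof.
case=> P [Q [QP PQ rhoP xP]]; exists P, Q; split=> // g /=.
by rewrite -scalemxAl -scalemxAr rhoP.
Qed.

Lemma HscaleM c d e M : (forall g, e g = c g * d g) ->
  Hiso (Hscale c (Hscale d M)) (Hscale e M).
Proof. by move=> cde; apply: Hiso_ext => [g|] //=; rewrite scalerA cde. Qed.

Lemma Hscale1 c M : (forall g, c g = 1) -> Hiso (Hscale c M) M.
Proof. by case: M => n r x c1; apply: Hiso_ext => [g|] //=; rewrite c1 scale1r. Qed.

Lemma Htens_congr_r M N N' : Hiso N N' -> Hiso (Htens a M N) (Htens a M N').
Proof.
case=> P [Q [QP PQ rhoP xP]]; exists (1%:M *t P), (1%:M *t Q); split=> [||g|] /=.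
- by rewrite tensmx_mul mulmx1 QP tens1mx1.
- by rewrite tensmx_mul mulmx1 PQ tens1mx1.
- by rewrite !tensmx_mul mulmx1 mul1mx rhoP.
- by rewrite mulmxDr mulmxDl !tensmx_mul !mulmx1 !mul1mx rhoP xP.
Qed.

Lemma HtensM0 M : Hiso (Htens a M (Hzero k G)) (Hzero k G).
Proof. by apply: (@Hiso_cast _ _ _ _ (muln0 _)) => [g|]; apply: flatmx0. Qed.

Lemma HtensDr M N L :
  Hiso (Htens a M (Hsum N L)) (Hsum (Htens a M N) (Htens a M L)).
Proof.
case: M N L => [m rm xm] [p rn xn] [q rl xl]; rewrite /Htens /Hsum /=.
pose P : 'M[k]_(m * p + m * q, m * (p + q)) :=
  col_mx (1%:M *t row_mx 1%:M 0) (1%:M *t row_mx 0 1%:M).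
pose Q : 'M[k]_(m * (p + q), m * p + m * q) :=
  row_mx (1%:M *t col_mx 1%:M 0) (1%:M *t col_mx 0 1%:M).
have P_tens (X : 'M[k]_m) (Y : 'M[k]_p) (Z : 'M[k]_q) :
    P *m (X *t block_mx Y 0 0 Z) = block_mx (X *t Y) 0 0 (X *t Z) *m P.
  rewrite /P mul_col_mx mul_block_col !mul0mx addr0 add0r !tensmx_mul !mul1mx.
  rewrite !mul_row_block !mul_mx_row !mul0mx !mulmx1 !mulmx0 !addr0 !add0r.
  by rewrite !mul1mx.
apply: (@Hiso_linv _ _ (HMod _ _ _) (HMod _ _ _) P Q) => /=.
- by rewrite mulnDr.
- rewrite /P /Q mul_row_col !tensmx_mul !mul_col_row !mulmx1 !mulmx0.
  by rewrite -tensmxDr add_block_mx !addr0 !add0r -scalar_mx_block tens1mx1.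
- by move=> g; apply: P_tens.
- by rewrite mulmxDr !P_tens -mulmxDl add_block_mx !addr0.
Qed.

Lemma Vmod1_rho lam g : hrho (Vmod chi 1 lam) g = (lam g)%:M.
Proof. by apply/matrixP => i j; rewrite !ord1 !mxE expr0 !mul1r mulr1n. Qed.

Lemma Vmod1_x lam : hx (Vmod chi 1 lam) = 0.
Proof. by apply/matrixP => i j; rewrite !ord1 !mxE. Qed.

Lemma Htens_Vmod1 lam M : Hiso (Htens a (Vmod chi 1 lam) M) (Hscale lam M).
Proof.
case: M => n r x; apply: (@Hiso_cast _ _ _ _ (mul1n n)) => [g|].
  by rewrite Vmod1_rho tens_scalar_mx castmx_comp castmx_id.
rewrite Vmod1_x tens0mx add0r -[1%:M]/((1 : k)%:M : 'M_1) tens_scalar_mx.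
by rewrite castmx_comp castmx_id scale1r.
Qed.

Lemma HtensM1 M : Hiso (Htens a M (Vmod chi 1 (@eps k G))) M.
Proof.
case: M => m r x; apply: (@Hiso_cast _ _ _ _ (muln1 m)) => [g|];
  rewrite Vmod1_rho ?Vmod1_x ?tensmx0 ?addr0 tens_mx_scalar;
  by rewrite castmx_comp castmx_id scale1r.
Qed.

Lemma Vmod_rhoE t lam g :
  hrho (Vmod chi t lam) g = diag_mx (\row_(i < t) (chi g ^+ i * lam g)).
Proof. by apply/matrixP => i j; rewrite !mxE mulr_natl. Qed.

Lemma Vmod_Hscale t c lam mu : (forall g, mu g = c g * lam g) ->
  Hiso (Vmod chi t mu) (Hscale c (Vmod chi t lam)).
Proof.
move=> mu_cl; apply: Hiso_ext => [g|] //; apply/matrixP => i j.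
by rewrite !mxE mu_cl; ring.
Qed.

(* In V_t (x) (c M) the term x (x) a of the coproduct picks up the factor
   c(a); conjugating by diag(c(a)^-i) absorbs it. *)
Lemma Htens_Vmod_Hscale t lam c M : c a != 0 ->
  Hiso (Htens a (Vmod chi t lam) (Hscale c M))
       (Hscale c (Htens a (Vmod chi t lam) M)).
Proof.
move=> ca0; pose D : 'M[k]_t := diag_mx (\row_(i < t) (c a ^+ i)^-1).
pose D' : 'M[k]_t := diag_mx (\row_(i < t) c a ^+ i).
have D'D : D' *m D = 1%:M.
  rewrite mulmx_diag -diag_const_mx; congr diag_mx; apply/rowP => i.
  by rewrite !mxE mulfV // expf_neq0.
have Dx : c a *: (D *m hx (Vmod chi t lam)) = hx (Vmod chi t lam) *m D.
  apply/matrixP => i j; rewrite mul_diag_mx mul_mx_diag !mxE.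
  case: eqP => [->|_]; last by rewrite !mulr0 mul0r.
  by rewrite mulr1 mul1r exprS invfM mulrA mulfV // mul1r.
have Drho g : D *m hrho (Vmod chi t lam) g = hrho (Vmod chi t lam) g *m D.
  by rewrite Vmod_rhoE diag_mxC.
case: M => n r x.
apply: (@Hiso_linv _ _ (HMod _ _ _) (HMod _ _ _) (D *t 1%:M) (D' *t 1%:M)) => //=.
- by rewrite tensmx_mul D'D mulmx1 tens1mx1.
- move=> g; rewrite -[in RHS]scalemxAl !tensmx_mul mulmx1 mul1mx tensmxZr.
  by rewrite Drho.
- by rewrite mulmxDr mulmxDl !tensmx_mul !mulmx1 !mul1mx tensmxZr -tensmxZl Dx.
Qed.

End Tensor.

Section StandardBasis.
Variable k : fieldType.

(* Indexed by nat so that [j.+1] and [j.-1] need no bound; out of range it is 0. *)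
Definition ecol n (j : nat) : 'cV[k]_n := \col_(i < n) ((i : nat) == j)%:R.

(* [u *t v] has [1 * 1] columns, which is not syntactically [1]. *)
Definition tenscv m n (u : 'cV[k]_m) (v : 'cV[k]_n) : 'cV[k]_(m * n) := u *t v.

Lemma ecol_out n j : (n <= j)%N -> ecol n j = 0.
Proof.
move=> le_nj; apply/colP => i; rewrite !mxE.
by have /ltn_eqF-> : (i < j)%N by exact: leq_trans (ltn_ord i) le_nj.
Qed.

Lemma mul_ecol p q (A : 'M[k]_(q, p)) (j : 'I_p) : A *m ecol p j = col j A.
Proof.
apply/colP => i; rewrite !mxE (bigD1 j) //= big1 ?addr0 => [|l /negPf l_j].
  by rewrite !mxE eqxx mulr1.
by rewrite !mxE -[(l == j :> nat)]/(l == j) l_j mulr0.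
Qed.

Lemma mul_matrix_ecol p q (F : 'I_q -> nat -> k) j :
  (\matrix_(i < q, l < p) F i l) *m ecol p j = \col_i ((j < p)%:R * F i j).
Proof.
case: (ltnP j p) => [lt_jp|le_pj]; last first.
  by apply/colP => i; rewrite ecol_out // mulmx0 !mxE mul0r.
by rewrite -[j]/(val (Ordinal lt_jp)) mul_ecol; apply/colP => i; rewrite !mxE mul1r.
Qed.

Lemma eq_mx_ecol p q (A B : 'M[k]_(q, p)) :
  (forall j : 'I_p, A *m ecol p j = B *m ecol p j) -> A = B.
Proof.
move=> eqAB; apply/matrixP => i j; have := congr1 (fun v : 'cV_q => v i 0) (eqAB j).
by rewrite !mul_ecol !mxE.
Qed.

Lemma ecol_lshift m n (i : 'I_m) : ecol (m + n) (lshift n i) = col_mx (ecol m i) 0.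
Proof.
apply/colP => l; rewrite !mxE; case: splitP => l' ->; rewrite !mxE //=.
by rewrite gtn_eqF // ltn_addr.
Qed.

Lemma ecol_rshift m n (i : 'I_n) : ecol (m + n) (rshift m i) = col_mx 0 (ecol n i).
Proof.
apply/colP => l; rewrite !mxE; case: splitP => l' ->; rewrite !mxE //=.
  by rewrite ltn_eqF // ltn_addr.
by rewrite eqn_add2l.
Qed.

Lemma ecol_tens m n (i : 'I_m) (j : 'I_n) :
  ecol (m * n) (mxtens_index (i, j)) = tenscv (ecol m i) (ecol n j).
Proof.
apply/matrixP => l c; case: (mxtens_indexP l) => l1 l2.
rewrite /tenscv !mxE mxtens_indexK -natrM val_eqE.
by rewrite (inj_eq (can_inj (@mxtens_indexK m n))) xpair_eqE mulnb.
Qed.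

Lemma eq_mx_ecol_block p q r (A B : 'M[k]_(r, p + q)) :
  (forall i : 'I_p, A *m col_mx (ecol p i) 0 = B *m col_mx (ecol p i) 0) ->
  (forall i : 'I_q, A *m col_mx 0 (ecol q i) = B *m col_mx 0 (ecol q i)) -> A = B.
Proof.
move=> eqAB_l eqAB_r; apply: eq_mx_ecol => j; rewrite -(splitK j).
by case: (split j) => i /=; rewrite ?ecol_lshift ?ecol_rshift.
Qed.

Lemma mul_tenscv m n p q (A : 'M[k]_(p, m)) (B : 'M[k]_(q, n)) u v :
  (A *t B) *m tenscv u v = tenscv (A *m u) (B *m v).
Proof. exact: (tensmx_mul A B u v). Qed.

Lemma tenscvZl m n c (u : 'cV[k]_m) (v : 'cV[k]_n) :
  tenscv (c *: u) v = c *: tenscv u v.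
Proof. exact: (tensmxZl c u v). Qed.

Lemma tenscvZr m n c (u : 'cV[k]_m) (v : 'cV[k]_n) :
  tenscv u (c *: v) = c *: tenscv u v.
Proof. exact: (tensmxZr c u v). Qed.

Lemma tens0cv m n (v : 'cV[k]_n) : tenscv (0 : 'cV[k]_m) v = 0.
Proof. exact: (@tens0mx k m 1 n 1 v). Qed.

Lemma tenscv0 m n (u : 'cV[k]_m) : tenscv u (0 : 'cV[k]_n) = 0.
Proof. exact: (@tensmx0 k m 1 n 1 u). Qed.

End StandardBasis.

Definition qint (R : pzSemiRingType) (t : R) (j : nat) : R := \sum_(i < j) t ^+ i.

Section QInteger.
Variables (R : pzRingType) (t : R).

Lemma qint0 : qint t 0 = 0.
Proof. by rewrite /qint big_ord0. Qed.

Lemma qintS j : qint t j.+1 = qint t j + t ^+ j.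
Proof. by rewrite /qint big_ord_recr. Qed.

Lemma qintSl j : qint t j.+1 = 1 + t * qint t j.
Proof.
rewrite /qint big_ord_recl mulr_sumr; congr (_ + _).
by apply: eq_bigr => i _; rewrite exprS.
Qed.

Lemma qint_neq0 j : t ^+ j != 1 -> qint t j != 0.
Proof.
by apply: contra => /eqP qt0; rewrite -subr_eq0 subrX1 -/(qint t j) qt0 mulr0.
Qed.

End QInteger.

Section VmodBasis.
Variables (k : fieldType) (G : groupType) (chi : G -> k).

Lemma Vmod_x_ecol t lam j : hx (Vmod chi t lam) *m ecol k t j = ecol k t j.+1.
Proof.
rewrite /= (@mul_matrix_ecol _ t t (fun (i : 'I_t) l => (i == l.+1 :> nat)%:R)).
apply/colP => i; rewrite !mxE; case: (ltnP j t) => [_|le_tj]; first by rewrite mul1r.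
by rewrite mul0r ltn_eqF //; have := ltn_ord i; lia.
Qed.

Lemma Vmod_rho_ecol t lam g j :
  hrho (Vmod chi t lam) g *m ecol k t j = (chi g ^+ j * lam g) *: ecol k t j.
Proof.
pose F (i : 'I_t) l := (i == l :> nat)%:R * (chi g ^+ i * lam g).
rewrite /= (@mul_matrix_ecol _ t t F); apply/colP => i; rewrite !mxE /F.
case: (ltnP j t) => [_|le_tj]; last by rewrite mul0r ltn_eqF ?mulr0 //; have := ltn_ord i; lia.
by case: eqP => [->|_]; rewrite ?mulr1 ?mul1r ?mulr0 ?mul0r.
Qed.

End VmodBasis.

Section ClebschGordan.
Variables (k : fieldType) (G : groupType) (a : G) (chi : G -> k) (n : nat).
Hypothesis chi_a_n1 : chi a ^+ n.+1 != 1.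

Local Notation t := (chi a).
Local Notation q := (qint (chi a)).
Local Notation e i := (ecol k 2 i).
Local Notation f j := (ecol k n.+1 j).
Local Notation V2 := (Vmod chi 2 (@eps k G)).

(* Images of the standard bases of V_(n+2) and V_n(chi) in V_2 (x) V_(n+1):
   x maps [cg_low j] to [cg_low j.+1] because [q j.+1 = q j + t ^+ j], and the
   coefficient [t * (q r - q n)] vanishes at [r = n], so x kills [cg_high n.-1]. *)
Definition cg_low j : 'cV[k]_(2 * n.+1) :=
  tenscv (e 0) (f j) + q j *: tenscv (e 1) (f j.-1).
Definition cg_high r : 'cV[k]_(2 * n.+1) :=
  tenscv (e 0) (f r.+1) + (t * (q r - q n)) *: tenscv (e 1) (f r).

Definition cg_mx : 'M[k]_(2 * n.+1, n.+2 + n) :=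
  row_mx (\matrix_(i, j) cg_low j i 0) (\matrix_(i, r) cg_high r i 0).

Definition cg_coord0 j : 'cV[k]_(n.+2 + n) :=
  (1 - q j / q n.+1) *: col_mx (ecol k n.+2 j) 0
  + (q j / q n.+1) *: col_mx 0 (ecol k n j.-1).
Definition cg_coord1 j : 'cV[k]_(n.+2 + n) :=
  (q n.+1)^-1 *: (col_mx (ecol k n.+2 j.+1) 0 - col_mx 0 (ecol k n j)).

Definition cg_inv : 'M[k]_(n.+2 + n, 2 * n.+1) :=
  \matrix_(i, u) (let: (p, j) := mxtens_unindex u in
                  if p == 0 :> nat then cg_coord0 j else cg_coord1 j) i 0.

Let qn1_neq0 : q n.+1 != 0 := qint_neq0 chi_a_n1.

Lemma cg_mx_low j : cg_mx *m col_mx (ecol k n.+2 j) 0 = cg_low j.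
Proof.
rewrite mul_row_col mulmx0 addr0 (@mul_matrix_ecol _ _ _ (fun i j => cg_low j i 0)).
apply/colP => i; rewrite mxE; case: (ltnP j n.+2) => [_|le_nj]; first by rewrite mul1r.
have [le_n1j le_n1j1] : (n.+1 <= j)%N /\ (n.+1 <= j.-1)%N by split; lia.
by rewrite mul0r /cg_low (ecol_out _ le_n1j) (ecol_out _ le_n1j1) !tenscv0 scaler0 addr0 mxE.
Qed.

Lemma cg_mx_high r : cg_mx *m col_mx 0 (ecol k n r) = cg_high r.
Proof.
rewrite mul_row_col mulmx0 add0r (@mul_matrix_ecol _ _ _ (fun i r => cg_high r i 0)).
apply/colP => i; rewrite mxE; case: (ltnP r n) => [_|le_nr]; first by rewrite mul1r.
rewrite mul0r /cg_high (@ecol_out _ n.+1 r.+1) // tenscv0 add0r.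
case: (ltnP n r) => [lt_nr|le_rn].
  by rewrite (@ecol_out _ n.+1 r) // tenscv0 scaler0 mxE.
have -> : r = n by apply/eqP; rewrite eqn_leq le_nr le_rn.
by rewrite subrr mulr0 scale0r mxE.
Qed.

Lemma cg_inv_e0 j : cg_inv *m tenscv (e 0) (f j) = cg_coord0 j.
Proof.
case: (ltnP j n.+1) => [lt_jn|le_nj].
  rewrite -(ecol_tens k (ord0 : 'I_2) (Ordinal lt_jn)) mul_ecol.
  by apply/colP => i; rewrite 2!mxE mxtens_indexK.
rewrite (@ecol_out _ n.+1 j) // tenscv0 mulmx0 /cg_coord0.
case: (ltnP n.+1 j) => [lt_nj|le_jn].
  have [le_n2j le_nj1] : (n.+2 <= j)%N /\ (n <= j.-1)%N by split; lia.
  by rewrite (ecol_out _ le_n2j) (ecol_out _ le_nj1) !col_mx0 !scaler0 addr0.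
have -> : j = n.+1 by apply/eqP; rewrite eqn_leq le_jn le_nj.
by rewrite divff // subrr scale0r add0r /= (@ecol_out _ n n) // col_mx0 scaler0.
Qed.

Lemma cg_inv_e1 j : cg_inv *m tenscv (e 1) (f j) = cg_coord1 j.
Proof.
case: (ltnP j n.+1) => [lt_jn|le_nj].
  rewrite -(ecol_tens k (Ordinal (isT : 1 < 2)%N) (Ordinal lt_jn)) mul_ecol.
  by apply/colP => i; rewrite 2!mxE mxtens_indexK.
rewrite (@ecol_out _ n.+1 j) // tenscv0 mulmx0 /cg_coord1.
by rewrite (ecol_out _ (le_nj : n.+2 <= j.+1)%N) (ecol_out _ (ltnW le_nj)) !col_mx0 subrr scaler0.
Qed.

Lemma cg_invK : cg_inv *m cg_mx = 1%:M.
Proof.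
apply: eq_mx_ecol_block => [j|r]; rewrite -mulmxA mul1mx.
  rewrite cg_mx_low /cg_low mulmxDr -scalemxAr cg_inv_e0 cg_inv_e1 /cg_coord0 /cg_coord1.
  case: j => [[|j] lt_jn] /=; first by rewrite qint0 mul0r subr0 scale1r !scale0r !addr0.
  by apply/matrixP => x y; rewrite !mxE; field.
rewrite cg_mx_high /cg_high mulmxDr -scalemxAr cg_inv_e0 cg_inv_e1 /cg_coord0 /cg_coord1 /=.
move: qn1_neq0; rewrite !qintSl => qSSn_neq0.
by apply/matrixP => x y; rewrite !mxE; field.
Qed.

Local Notation CG_sum := (Hsum (Vmod chi n.+2 (@eps k G)) (Vmod chi n (charpow chi 1))).
Local Notation CG_tens := (Htens a V2 (Vmod chi n.+1 (@eps k G))).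

Lemma cg_rho g : cg_mx *m hrho CG_sum g = hrho CG_tens g *m cg_mx.
Proof.
apply: eq_mx_ecol_block => [j|r]; rewrite -!mulmxA hrho_Hsum mul_block_diag_col mulmx0.
  rewrite Vmod_rho_ecol col_mxZl -scalemxAr !cg_mx_low hrho_Htens /cg_low.
  rewrite mulmxDr -scalemxAr !mul_tenscv !Vmod_rho_ecol !tenscvZl !tenscvZr /eps.
  case: j => [[|j] lt_jn] /=; first by rewrite qint0 !scale0r !addr0 !expr0 !mulr1 !scale1r.
  by apply/matrixP => x y; rewrite !mxE !exprS expr0; ring.
rewrite Vmod_rho_ecol col_mxZr -scalemxAr !cg_mx_high hrho_Htens /cg_high.
rewrite mulmxDr -scalemxAr !mul_tenscv !Vmod_rho_ecol !tenscvZl !tenscvZr /eps /charpow.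
by apply/matrixP => x y; rewrite !mxE !exprS expr0; ring.
Qed.

Lemma cg_x : cg_mx *m hx CG_sum = hx CG_tens *m cg_mx.
Proof.
have x_e1 : hx V2 *m e 1 = 0 by rewrite Vmod_x_ecol ecol_out.
apply: eq_mx_ecol_block => [j|r]; rewrite -!mulmxA hx_Hsum mul_block_diag_col mulmx0.
  rewrite Vmod_x_ecol !cg_mx_low hx_Htens /cg_low mulmxDr -scalemxAr !mulmxDl !mul_tenscv.
  rewrite Vmod_x_ecol x_e1 !mul1mx !Vmod_x_ecol !Vmod_rho_ecol tens0cv add0r !tenscvZr /eps.
  case: j => [[|j] lt_jn] /=.
    by rewrite qint0 !scale0r !addr0 qintS qint0 expr0 !mulr1 add0r scale1r addrC.
  by rewrite qintS; apply/matrixP => x y; rewrite !mxE; ring.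
rewrite Vmod_x_ecol !cg_mx_high hx_Htens /cg_high mulmxDr -scalemxAr !mulmxDl !mul_tenscv.
rewrite Vmod_x_ecol x_e1 !mul1mx !Vmod_x_ecol !Vmod_rho_ecol tens0cv add0r !tenscvZr /eps qintS.
by apply/matrixP => x y; rewrite !mxE !exprS; ring.
Qed.

Lemma Htens_V2_Vmod : Hiso CG_sum CG_tens.
Proof.
by apply: (@Hiso_linv _ _ CG_sum CG_tens cg_mx cg_inv _ cg_invK cg_rho cg_x) => /=; lia.
Qed.

End ClebschGordan.

Section Pascal.
Local Open Scope nat_scope.

Lemma sumn_iota_pred1 (F : nat -> nat) j N : (forall i, i != j -> F i = 0) ->
  sumn [seq F i | i <- iota 0 N] = if j < N then F j else 0.
Proof.
move=> F0; elim: N => [|N IHN] //.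
rewrite -addn1 iotaD map_cat sumn_cat IHN /= add0n addn0.
case: (ltngtP j N) => [lt_jN|lt_Nj|<-]; last by rewrite addn1 ltnSn add0n.
  by rewrite (F0 N) ?gtn_eqF // addn0 ltn_addr.
by rewrite (F0 N) ?ltn_eqF // addn0 addn1 ltnS leqNgt lt_Nj.
Qed.

(* The pair (i, j) stands for chi^i y^j: [cheb_terms n b] lists the terms
   chi^i y^(n - 2i) of the formula for [V_(n+1)] with sign (-1)^i = (-1)^b,
   each repeated 'C(n - i, i) times. *)
Definition cheb_terms n (b : bool) : seq (nat * nat) :=
  flatten [seq nseq (if odd i == b then 'C(n - i, i) else 0) (i, n - i.*2)
          | i <- iota 0 n./2.+1].

Definition incr_y (c : nat * nat) := (c.1, c.2.+1).
Definition incr_chi (c : nat * nat) := (c.1.+1, c.2).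

Lemma count_cheb_terms n b i j :
  count_mem (i, j) (cheb_terms n b) =
  if (odd i == b) && (i.*2 + j == n) then 'C(n - i, i) else 0.
Proof.
rewrite /cheb_terms count_flatten -map_comp (@sumn_iota_pred1 _ i) => [|i' ne_i'i] /=.
  case: (ltnP i n./2.+1) => [le_in|lt_ni]; last first.
    by rewrite (_ : i.*2 + j == n = false) ?andbF //; apply/negbTE/eqP; lia.
  rewrite count_nseq /= xpair_eqE eqxx /=.
  have -> : (n - i.*2 == j) = (i.*2 + j == n) by apply/eqP/eqP => ?; lia.
  by case: (odd i == b); case: (i.*2 + j == n); rewrite ?mul1n ?mul0n ?andbF.
by rewrite count_nseq /= xpair_eqE (negbTE ne_i'i).
Qed.

Lemma count_incr_y (s : seq (nat * nat)) i j :
  count_mem (i, j) (map incr_y s) = if j is j'.+1 then count_mem (i, j') s else 0.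
Proof.
rewrite count_map; case: j => [|j]; last by apply: eq_count => -[i' j'] /=; rewrite !xpair_eqE.
apply/eqP; rewrite -leqn0 leqNgt -has_count.
by apply/hasPn => -[i' j'] /=; rewrite xpair_eqE andbF.
Qed.

Lemma count_incr_chi (s : seq (nat * nat)) i j :
  count_mem (i, j) (map incr_chi s) = if i is i'.+1 then count_mem (i', j) s else 0.
Proof.
rewrite count_map; case: i => [|i]; last by apply: eq_count => -[i' j'] /=; rewrite !xpair_eqE.
by apply/eqP; rewrite -leqn0 leqNgt -has_count; apply/hasPn => -[i' j'].
Qed.

(* Pascal's rule 'C(n+2-i, i) = 'C(n+1-i, i) + 'C(n+1-i, i-1), read on monomials. *)
Lemma cheb_terms_rec n b :
  perm_eq (cheb_terms n.+2 b)
          (map incr_y (cheb_terms n.+1 b) ++ map incr_chi (cheb_terms n (~~ b))).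
Proof.
apply/allP => -[i j] _ /=; apply/eqP.
rewrite count_cat count_incr_y count_incr_chi.
have oddSb i' : (odd i'.+1 == b) = (odd i' == ~~ b) by rewrite /=; case: (odd i'); case: b.
case: i j => [|i] [|j]; rewrite ?count_cheb_terms /= ?oddSb.
- by rewrite andbF.
- by rewrite !bin0 addn0.
- rewrite add0n doubleS !addSn !eqSS.
  case: (i.*2 + 0 =P n) => [e_in|]; rewrite ?andbF //.
  by rewrite subSS -e_in addn0 -addnn -addSn !addnK !binn.
rewrite doubleS !addSn !eqSS -addnS.
case: (odd i == ~~ b); case: (i.*2 + j.+1 =P n) => [e_ijn|] //=.
rewrite subSS (_ : n.+1 - i = (n - i).+1) ?binS 1?addnC //.
by rewrite -e_ijn -addnn; lia.
Qed.

End Pascal.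

Section Chebyshev.
Variables (k : fieldType) (G : groupType) (a : G) (chi : G -> k).
Hypothesis chi_a_neq0 : chi a != 0.
Hypothesis chi_a_not_root : forall n, chi a ^+ n.+1 != 1.

Local Notation V2 := (Vmod chi 2 (@eps k G)).
Local Notation Vchi := (Vmod chi 1 (charpow chi 1)).

Definition monomial (c : nat * nat) : Hmod k G :=
  Htens a (Vmod chi 1 (charpow chi c.1)) (Htpow chi a V2 c.2).

Definition Hterms (s : seq (nat * nat)) : Hmod k G := Hbig (map monomial s).

Lemma Htens_V2_monomial c : Hiso (Htens a V2 (monomial c)) (monomial (incr_y c)).
Proof.
apply: (Hiso_trans (Htens_congr_r _ _ (Htens_Vmod1 _ _ _ _))).
apply: (Hiso_trans (Htens_Vmod_Hscale _ _ _ _ _)) (Hiso_sym (Htens_Vmod1 _ _ _ _)).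
by rewrite expf_neq0.
Qed.

Lemma Htens_Vchi_monomial c : Hiso (Htens a Vchi (monomial c)) (monomial (incr_chi c)).
Proof.
apply: Hiso_trans (Htens_Vmod1 _ _ _ _) _.
apply: Hiso_trans (Hscale_congr _ (Htens_Vmod1 _ _ _ _)) _.
apply: (Hiso_trans (HscaleM (e := charpow chi c.1.+1) _ _)) => [g|].
  by rewrite /charpow exprS expr1.
exact: Hiso_sym (Htens_Vmod1 _ _ _ _).
Qed.

Lemma Htens_Hterms N (f : nat * nat -> nat * nat) s :
    (forall c, Hiso (Htens a N (monomial c)) (monomial (f c))) ->
  Hiso (Htens a N (Hterms s)) (Hterms (map f s)).
Proof.
move=> Nf; elim: s => [|c s IHs] /=; first exact: HtensM0.
exact: Hiso_trans (HtensDr _ _ _ _) (Hsum_congr (Nf c) IHs).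
Qed.

Lemma Hterms_rec n b :
  Hiso (Hterms (cheb_terms n.+2 b))
       (Hsum (Hterms (map incr_y (cheb_terms n.+1 b)))
             (Hterms (map incr_chi (cheb_terms n (~~ b))))).
Proof.
apply: Hiso_trans (Hbig_perm monomial (cheb_terms_rec n b)) _.
by rewrite map_cat; apply: Hbig_cat.
Qed.

Definition cheb_iso n :=
  Hiso (Hsum (Vmod chi n.+1 (@eps k G)) (Hterms (cheb_terms n true)))
       (Hterms (cheb_terms n false)).

Lemma cheb_iso0 : cheb_iso 0.
Proof.
apply: Hsum_congr (Hiso_refl _); apply: Hiso_sym.
apply: Hiso_trans (Htens_Vmod1 _ _ _ _) (Hscale1 _ _) => g.
by rewrite /charpow expr0.
Qed.

Lemma cheb_iso1 : cheb_iso 1.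
Proof.
apply: Hsum_congr (Hiso_refl _); apply: Hiso_sym.
apply: Hiso_trans (Htens_Vmod1 _ _ _ _) _.
apply: Hiso_trans (Hscale1 _ _) (HtensM1 _ _ _) => g.
by rewrite /charpow expr0.
Qed.

Lemma cheb_isoSS n : cheb_iso n -> cheb_iso n.+1 -> cheb_iso n.+2.
Proof.
rewrite /cheb_iso => iso_n iso_n1.
have iso_y : Hiso (Hsum (Hsum (Vmod chi n.+3 (@eps k G)) (Vmod chi n.+1 (charpow chi 1)))
                        (Hterms (map incr_y (cheb_terms n.+1 true))))
                  (Hterms (map incr_y (cheb_terms n.+1 false))).
  apply: Hiso_trans _ (Htens_Hterms _ Htens_V2_monomial).
  apply: Hiso_trans _ (Htens_congr_r _ _ iso_n1).
  apply: Hiso_trans _ (Hiso_sym (HtensDr _ _ _ _)).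
  exact: Hsum_congr (Htens_V2_Vmod (chi_a_not_root n.+1))
                    (Hiso_sym (Htens_Hterms _ Htens_V2_monomial)).
have iso_chi : Hiso (Hsum (Vmod chi n.+1 (charpow chi 1))
                          (Hterms (map incr_chi (cheb_terms n true))))
                    (Hterms (map incr_chi (cheb_terms n false))).
  apply: Hiso_trans _ (Htens_Hterms _ Htens_Vchi_monomial).
  apply: Hiso_trans _ (Htens_congr_r _ _ iso_n).
  apply: Hiso_trans _ (Hiso_sym (HtensDr _ _ _ _)).
  apply: Hsum_congr _ (Hiso_sym (Htens_Hterms _ Htens_Vchi_monomial)).
  apply: Hiso_trans _ (Hiso_sym (Htens_Vmod1 _ _ _ _)).
  by apply: Vmod_Hscale => g; rewrite /eps mulr1.
apply: Hiso_trans (Hsum_congr (Hiso_refl _) (Hterms_rec _ _)) _.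
apply: Hiso_trans _ (Hiso_sym (Hterms_rec _ _)).
exact: Hiso_Hsum_combine iso_y iso_chi.
Qed.

Lemma cheb_iso_all n : cheb_iso n.
Proof.
suff : cheb_iso n /\ cheb_iso n.+1 by case.
elim: n => [|n [iso_n iso_n1]]; first by split; [exact: cheb_iso0 | exact: cheb_iso1].
by split; last exact: cheb_isoSS.
Qed.

End Chebyshev.

Section GreenRing.
Variables (k : fieldType) (G : groupType).

Lemma posmod_signed (c : nat -> nat) (M : nat -> Hmod k G) s :
  posmod [seq ((-1) ^+ i * (c i)%:Z, M i) | i <- s] =
  Hbig [seq Hmul (if odd i == false then c i else 0%N) (M i) | i <- s].
Proof.
rewrite /posmod -map_comp; congr Hbig; apply: eq_map => i /=.
rewrite -signr_odd; case: (odd i); rewrite ?expr0 ?mul1r //= expr1 mulN1r.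
by case: (c i) => [|n]; rewrite ?oppr_ge0.
Qed.

Lemma negmod_signed (c : nat -> nat) (M : nat -> Hmod k G) s :
  negmod [seq ((-1) ^+ i * (c i)%:Z, M i) | i <- s] =
  Hbig [seq Hmul (if odd i == true then c i else 0%N) (M i) | i <- s].
Proof.
rewrite /negmod -map_comp; congr Hbig; apply: eq_map => i /=.
rewrite -signr_odd; case: (odd i); rewrite ?expr0 ?mul1r //= expr1 mulN1r.
by case: (c i) => [|n]; rewrite ?oppr_lt0 ?abszN.
Qed.

Lemma inW_Hzero (chi : G -> k) : inW chi (Hzero k G).
Proof.
split; first by split=> [|g h|g] /=; rewrite ?flatmx0 //; apply/matrixP => [[]].
by exists 1%:M; split; [exact: unitmx1 | case].
Qed.

End GreenRing.

Theorem lemma4p3 (k : closedFieldType) (G : groupType) (a : G) (chi : G -> k)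
  (char0 : [pchar k] =i pred0)
  (a_central : forall g : G, (a * g)%g = (g * a)%g)
  (chi_char : is_char chi) (chi_a : chi a != 1)
  (chi_inf : forall n : nat, (0 < n)%N -> exists g : G, chi g ^+ n != 1)
  (q_not_root : forall n : nat, (0 < n)%N -> (chi a)^-1 ^+ n != 1)
  (m : nat) (m_ge1 : (1 <= m)%N) :
  green_eq chi
    [:: (1%:Z, Vmod chi m (@eps k G))]
    [seq ((-1) ^+ i * ('C(m.-1 - i, i))%:Z,
          Htens a (Vmod chi 1 (charpow chi i))
                  (Htpow chi a (Vmod chi 2 (@eps k G)) (m.-1 - i.*2)))
       | i <- iota 0 (m.-1./2).+1].
Proof.
have chi_a_neq0 : chi a != 0.
  case: chi_char => chi1 chiM; apply: contraTneq isT => chi_a0.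
  by have := chiM a a^-1%g; rewrite mulgV chi1 chi_a0 mul0r => /eqP; rewrite oner_eq0.
have chi_a_not_root n : chi a ^+ n.+1 != 1.
  by have := q_not_root n.+1 isT; rewrite exprVn invr_eq1.
case: m m_ge1 => // n _; exists (Hzero k G); split; first exact: inW_Hzero.
apply: Hsum_congr (Hiso_refl _); rewrite posmod_signed negmod_signed.
have terms (b : bool) :=
  Hbig_Hmul (fun i => if odd i == b then 'C(n - i, i) else 0%N)
            (fun i => (i, (n - i.*2)%N)) (monomial a chi) (iota 0 n./2.+1).
pose Vn1 := Vmod chi n.+1 (@eps k G).
have one_pos : Hiso (posmod [:: (1%:Z, Vn1)]) Vn1 := Hiso_trans (HsumM0 _) (HsumM0 _).
have one_neg : Hiso (negmod [:: (1%:Z, Vn1)]) (Hzero k G) := HsumM0 _.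
apply: Hiso_trans (Hsum_congr one_pos (terms true)) _.
apply: Hiso_trans (cheb_iso_all chi_a_neq0 chi_a_not_root n) _.
apply: Hiso_trans (Hiso_sym (HsumM0 _)) _.
exact: Hsum_congr (Hiso_sym (terms false)) (Hiso_sym one_neg).
Qed.
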